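(* Consider the waning-immunity model described in the context, with $\beta_0>0$. Let $C>0$ be a constant as follows: for all sufficiently small $\delta\ge0$, every endemic equilibrium with $I^*\in[0,1]$ has $I^*\in J_1\cup J_2$, where $J_i=[y_i-C\sqrt\delta,\,y_i+C\sqrt\delta]$ and $y_1\le y_2$ are the real roots of $$1+\frac{r}{\beta_0x+\mu}-\frac{\beta_n}{\beta_nx+\mu+\omega_n}-\frac{\omega_n\beta_0}{(\beta_0x+\mu)(\beta_nx+\mu+\omega_n)}=0.$$ Suppose $J_i\subset(0,1]$ for some $i\in\{1,2\}$. Then for $\delta$ sufficiently small, provided $|y_1-y_2|\ge\delta^{1/3}$, there exists a unique endemic equilibrium of the system with $I^*\in J_i$.
   Context: Model: Fix an integer $n\ge 1$ and parameters $\delta\ge 0$ (rate of waning immunity), $\omega\ge 0$ (vaccination rate), $r>0$ (recovery rate), $\mu>0$ (birth = death rate), coverages $p_0=0$, $p_1,\dots,p_n\in[0,1]$, and transmission rates $0\le\beta_0\le\beta_1\le\dots\le\beta_n$ with $\beta_0<\beta_n$. Write $\omega_i=p_i\omega$, $\delta_i=(1-p_i)\delta$ (so $\delta_0=\delta$). The ODE system for $(S_0,\dots,S_n,I)$ is $$S_0'=\sum_{i=1}^n\omega_iS_i-\delta S_0+rI-\beta_0IS_0-\mu S_0,$$ $$S_i'=-\omega_iS_i+\delta_{i-1}S_{i-1}-\delta_iS_i-\beta_iIS_i-\mu S_i\quad(1\le i\le n-1),$$ $$S_n'=\mu-\omega_nS_n+\delta_{n-1}S_{n-1}-\beta_nIS_n-\mu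 S_n,$$ $$I'=I\sum_{i=0}^n\beta_iS_i-rI-\mu I,$$ with the normalization $\sum_iS_i+I=1$. An endemic equilibrium is an equilibrium $(S_0^*,\dots,S_n^*,I^* )$ of this system satisfying the normalization with $I^*\neq0$. *)

From HB Require Import structures.
From mathcomp Require Import all_boot all_order all_algebra.
From mathcomp Require Import reals exp.
Set Implicit Arguments. Unset Strict Implicit. Unset Printing Implicit Defensive.
Import Order.TTheory GRing.Theory Num.Theory.
Local Open Scope ring_scope.

(* Indices 0..n are natural numbers; parameters p, beta and the state S are
   nat-indexed, only the values at 0..n matter. omega_i = p_i omega,
   delta_i = (1 - p_i) delta. *)

Definition is_equilibrium (R : realType) (n : nat) (delta omega r mu : R)
    (p beta : nat -> R) (S : nat -> R) (I : R) : Prop :=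
  let om i := p i * omega in
  let de i := (1 - p i) * delta in
  [/\ \sum_(1 <= i < n.+1) om i * S i - delta * S 0%N + r * I
        - beta 0%N * I * S 0%N - mu * S 0%N = 0,
      (forall i, (1 <= i < n)%N ->
         - om i * S i + de i.-1 * S i.-1 - de i * S i - beta i * I * S i
         - mu * S i = 0),
      mu - om n * S n + de n.-1 * S n.-1 - beta n * I * S n - mu * S n = 0,
      I * (\sum_(i < n.+1) beta i * S i) - r * I - mu * I = 0
    & \sum_(i < n.+1) S i + I = 1].

Definition is_endemic_equilibrium (R : realType) (n : nat) (delta omega r mu : R)
    (p beta : nat -> R) (S : nat -> R) (I : R) : Prop :=
  is_equilibrium n delta omega r mu p beta S I /\ I <> 0.

Definition is_root_eq (R : realType) (n : nat) (omega r mu : R)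
    (p beta : nat -> R) (x : R) : Prop :=
  let wn := p n * omega in
  [/\ beta 0%N * x + mu != 0,
      beta n * x + mu + wn != 0
    & 1 + r / (beta 0%N * x + mu) - beta n / (beta n * x + mu + wn)
        - wn * beta 0%N / ((beta 0%N * x + mu) * (beta n * x + mu + wn)) = 0].

Definition in_J (R : realType) (C delta y x : R) : Prop :=
  y - C * Num.sqrt delta <= x <= y + C * Num.sqrt delta.

From HB Require Import structures.
From mathcomp Require Import all_boot all_order all_algebra.
From mathcomp Require Import reals exp lra ring.
From mathcomp Require Import boolp topology normedtype.
Import Order.TTheory GRing.Theory Num.Theory.
Import numFieldNormedType.Exports.
Set Implicit Arguments. Unset Strict Implicit. Unset Printing Implicit Defensive.
Local Open Scope ring_scope.

(* At an endemic equilibrium the S-equations are linear in S, so the whole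
   state is an explicit rational function of x = I and the waning rate d, and
   the infection equation collapses to one scalar equation [reduced_eq d x = 0].
   For d = 0 this is -mu times the quadratic obtained by clearing the
   denominators of the root equation, whose roots are y1 and y2; for d > 0 it
   differs from it by a remainder that is O(d) together with its Lipschitz
   constant on compact subsets of (0, +oo).  On J = [y - C sqrt d, y + C sqrt d]
   the quadratic changes sign with a slope of order |y1 - y2|, which dominates
   the O(d) perturbation once d is small: the intermediate value theorem gives
   a root in J and the Lipschitz bound makes it unique.  When y1 = y2 the
   hypothesis |y1 - y2| >= d^(1/3) forces d = 0. *)

Section LipschitzIVT.
Variable R : realType.

Lemma lipschitz_continuous (f : R -> R) (L : R) : 0 <= L ->
  (forall x1 x2, `|f x1 - f x2| <= L * `|x1 - x2|) -> continuous f.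
Proof.
move=> L0 hf x; apply/cvgrPdist_lt => e e0.
have L1 : 0 < L + 1 by lra.
near=> z.
apply: le_lt_trans (hf x z) _.
have : `|x - z| < e / (L + 1).
  near: z; apply/nbhs_ballP; exists (e / (L + 1)); first exact: divr_gt0.
  by move=> z; rewrite /ball.
move=> hz; apply: (le_lt_trans (y := (L + 1) * `|x - z|)).
  by apply: ler_wpM2r => //; lra.
by rewrite -ltr_pdivlMl // mulrC.
Unshelve. all: end_near.
Qed.

Definition clamp (a b x : R) := if x < a then a else if b < x then b else x.

Lemma clamp_itv (a b x : R) : a <= b -> a <= clamp a b x <= b.
Proof.
move=> ab; rewrite /clamp; case: (ltP x a) => hx; first by rewrite lexx ab.
by case: (ltP b x) => hbx; rewrite ?ab ?lexx ?hx ?hbx.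
Qed.

Lemma clamp_id (a b x : R) : a <= x <= b -> clamp a b x = x.
Proof.
move=> /andP[h1 h2]; rewrite /clamp; case: (ltP x a) => hx; first lra.
by case: (ltP b x) => hbx //; lra.
Qed.

Lemma clamp_lipschitz (a b x y : R) : a <= b ->
  `|clamp a b x - clamp a b y| <= `|x - y|.
Proof.
move=> ab; rewrite /clamp.
have h1 := ler_norm (x - y); have h2 := ler_norm (y - x); rewrite distrC in h2.
case: (ltP x a) => hx; case: (ltP y a) => hy; try case: (ltP b x) => hbx;
  try case: (ltP b y) => hby; rewrite ler_norml; apply/andP; split; lra.
Qed.

Lemma lipschitz_IVT (f : R -> R) (a b L : R) : a <= b -> 0 <= L ->
  (forall x1 x2, a <= x1 <= b -> a <= x2 <= b ->
     `|f x1 - f x2| <= L * `|x1 - x2|) ->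
  f a * f b <= 0 -> exists2 c, a <= c <= b & f c = 0.
Proof.
move=> ab L0 hf hab.
(* Clamping extends f from [a, b] to a Lipschitz function on the whole line. *)
pose g x := f (clamp a b x).
have g_cont : continuous g.
  apply: (lipschitz_continuous L0) => x1 x2.
  apply: le_trans (hf _ _ (clamp_itv _ ab) (clamp_itv _ ab)) _.
  exact/ler_wpM2l/clamp_lipschitz.
have [ga gb] : g a = f a /\ g b = f b by rewrite /g !clamp_id ?lexx ?ab.
have g_sign : Num.min (g a) (g b) <= 0 <= Num.max (g a) (g b).
  rewrite ga gb ge_min le_max.
  case: (lerP (f a) 0) => fa; case: (lerP (f b) 0) => fb /=.
  - have /eqP : f a * f b = 0 by apply/le_anti; rewrite hab mulr_le0.
    by rewrite mulf_eq0 => /orP[]/eqP e; rewrite e lexx ?orbT.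
  - by rewrite (ltW fb) orbT.
  - by rewrite (ltW fa).
  - by have := mulr_gt0 fa fb; lra.
have [c] := IVT ab (continuous_subspaceT g_cont) g_sign.
by rewrite in_itv /= => hc gc0; exists c; rewrite // -gc0 /g clamp_id.
Qed.

End LipschitzIVT.

Definition bounded_lipschitz (R : realFieldType) (m M B : R) (f : R -> R) :=
  (forall x, m <= x <= M -> `|f x| <= B) /\
  (forall x1 x2, m <= x1 <= M -> m <= x2 <= M -> `|f x1 - f x2| <= B * `|x1 - x2|).

Section BoundedLipschitz.
Variables (R : realFieldType) (m M : R).
Hypothesis mM : m <= M.
Local Notation bl := (bounded_lipschitz m M).

Lemma bounded_lipschitz_sub m' M' B f : m <= m' -> M' <= M ->
  bl B f -> bounded_lipschitz m' M' B f.
Proof.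
move=> mm' M'M [fB fL].
have sub x : m' <= x <= M' -> m <= x <= M by case/andP=> ? ?; apply/andP; split; lra.
by split=> [x /sub /fB|x1 x2 /sub h1 /sub h2]; last exact: fL.
Qed.

Lemma bounded_lipschitz_ge0 B f : bl B f -> 0 <= B.
Proof. by case=> fB _; apply: le_trans (normr_ge0 _) (fB m _); rewrite lexx mM. Qed.

Lemma bounded_lipschitz_le B B' f : B <= B' -> bl B f -> bl B' f.
Proof.
move=> le [fB fL]; split=> [x hx|x1 x2 h1 h2]; first exact: le_trans (fB _ hx) le.
exact: le_trans (fL _ _ h1 h2) (ler_wpM2r _ le).
Qed.

Lemma eq_bounded_lipschitz B f g : (forall x, m <= x <= M -> f x = g x) ->
  bl B f -> bl B g.
Proof.
move=> e [fB fL]; split=> [x hx|x1 x2 h1 h2]; first by rewrite -e //; exact: fB.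
by rewrite -!e //; exact: fL.
Qed.

Lemma bounded_lipschitz_cst k : bl `|k| (fun=> k).
Proof. by split=> // x1 x2 _ _; rewrite subrr normr0 mulr_ge0. Qed.

Lemma bounded_lipschitz0 : bl 0 (fun=> 0).
Proof. by have := bounded_lipschitz_cst 0; rewrite normr0. Qed.

Lemma bounded_lipschitz_id : bl (`|m| + `|M| + 1) id.
Proof.
have [m0 M0] := (normr_ge0 m, normr_ge0 M).
split=> [x /andP[mx xM]|x1 x2 _ _]; last by rewrite ler_peMl //; lra.
have [x0|x0] := lerP 0 x; first by rewrite ger0_norm //; have := ler_norm M; lra.
by rewrite ltr0_norm //; have := ler_norm (- m); rewrite normrN; lra.
Qed.

Lemma bounded_lipschitzD B1 B2 f g :
  bl B1 f -> bl B2 g -> bl (B1 + B2) (fun x => f x + g x).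
Proof.
move=> [fB fL] [gB gL]; split=> [x hx|x1 x2 h1 h2] /=.
  exact: le_trans (ler_normD _ _) (lerD (fB _ hx) (gB _ hx)).
rewrite opprD addrACA mulrDl.
exact: le_trans (ler_normD _ _) (lerD (fL _ _ h1 h2) (gL _ _ h1 h2)).
Qed.

Lemma bounded_lipschitzN B f : bl B f -> bl B (fun x => - f x).
Proof.
move=> [fB fL]; split=> [x hx|x1 x2 h1 h2] /=; first by rewrite normrN; exact: fB.
by rewrite -opprD normrN; exact: fL.
Qed.

Lemma bounded_lipschitzB B1 B2 f g :
  bl B1 f -> bl B2 g -> bl (B1 + B2) (fun x => f x - g x).
Proof. by move=> hf /bounded_lipschitzN; apply: bounded_lipschitzD. Qed.

Lemma bounded_lipschitzM B1 B2 f g :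
  bl B1 f -> bl B2 g -> bl (2 * B1 * B2) (fun x => f x * g x).
Proof.
move=> hf hg; have [B10 B20] := (bounded_lipschitz_ge0 hf, bounded_lipschitz_ge0 hg).
move: hf hg => [fB fL] [gB gL]; split=> [x hx|x1 x2 h1 h2] /=.
  rewrite normrM; have := fB _ hx; have := gB _ hx.
  have := normr_ge0 (f x); have := normr_ge0 (g x); nra.
have -> : f x1 * g x1 - f x2 * g x2 = f x1 * (g x1 - g x2) + g x2 * (f x1 - f x2).
  by ring.
apply: le_trans (ler_normD _ _) _; rewrite !normrM.
have := fB _ h1; have := gB _ h2; have := fL _ _ h1 h2; have := gL _ _ h1 h2.
have := normr_ge0 (f x1); have := normr_ge0 (g x2); have := normr_ge0 (x1 - x2).
have := normr_ge0 (f x1 - f x2); have := normr_ge0 (g x1 - g x2).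
move: `|f x1| `|g x2| `|x1 - x2| `|f x1 - f x2| `|g x1 - g x2| => a b c d e.
nra.
Qed.

Lemma bounded_lipschitzV B c f : 0 < c -> (forall x, m <= x <= M -> c <= f x) ->
  bl B f -> bl (B / c ^+ 2 + c^-1) (fun x => (f x)^-1).
Proof.
move=> c0 fc hf; have B0 := bounded_lipschitz_ge0 hf; move: hf => [_ fL].
have c2 : 0 < c ^+ 2 by exact: exprn_gt0.
have B0c : 0 <= B / c ^+ 2 by rewrite divr_ge0 // ltW.
split=> [x hx|x1 x2 h1 h2].
  have fx := fc _ hx; rewrite ger0_norm ?invr_ge0; last lra.
  suff : (f x)^-1 <= c^-1 by lra.
  by rewrite lef_pV2 ?posrE //; lra.
have [f1 f2] := (fc _ h1, fc _ h2).
have f12 : c ^+ 2 <= f x1 * f x2 by rewrite expr2 ler_pM //; lra.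
have [p1 p2] : 0 < f x1 /\ 0 < f x2 by split; lra.
have -> : (f x1)^-1 - (f x2)^-1 = (f x2 - f x1) / (f x1 * f x2).
  by field; rewrite !gt_eqF.
rewrite normrM normfV distrC (gtr0_norm (mulr_gt0 p1 p2)).
have lip := fL _ _ h1 h2.
have : `|f x1 - f x2| / (f x1 * f x2) <= B * `|x1 - x2| / c ^+ 2.
  apply: ler_pM => //; rewrite ?invr_ge0 ?(le_trans (ltW c2)) //.
  by rewrite lef_pV2 ?posrE // (lt_le_trans c2).
have : 0 <= c^-1 * `|x1 - x2| by rewrite mulr_ge0 // invr_ge0 ltW.
rewrite mulrDl mulrAC; lra.
Qed.

End BoundedLipschitz.

Section Families.
Variables (R : realFieldType) (m M dstar : R).
Hypothesis mM : m <= M.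
Local Notation bl := (bounded_lipschitz m M).

Definition bounded_family (F : R -> R -> R) :=
  exists B, forall d, 0 <= d <= dstar -> bl B (F d).

Definition small_family (F : R -> R -> R) :=
  exists K, forall d, 0 <= d <= dstar -> bl (K * d) (F d).

Lemma bounded_family_cst k : bounded_family (fun _ _ => k).
Proof. by exists `|k| => d _; exact: bounded_lipschitz_cst. Qed.

Lemma bounded_family_id : bounded_family (fun _ x => x).
Proof. by exists (`|m| + `|M| + 1) => d _; exact: bounded_lipschitz_id. Qed.

Lemma bounded_familyD F G : bounded_family F -> bounded_family G ->
  bounded_family (fun d x => F d x + G d x).
Proof.
move=> [B1 hF] [B2 hG]; exists (B1 + B2) => d hd.
by have := bounded_lipschitzD (hF _ hd) (hG _ hd).
Qed.

Lemma bounded_familyB F G : bounded_family F -> bounded_family G ->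
  bounded_family (fun d x => F d x - G d x).
Proof.
move=> [B1 hF] [B2 hG]; exists (B1 + B2) => d hd.
by have := bounded_lipschitzB (hF _ hd) (hG _ hd).
Qed.

Lemma bounded_familyM F G : bounded_family F -> bounded_family G ->
  bounded_family (fun d x => F d x * G d x).
Proof.
move=> [B1 hF] [B2 hG]; exists (2 * B1 * B2) => d hd.
by have := bounded_lipschitzM mM (hF _ hd) (hG _ hd).
Qed.

Lemma bounded_familyV c F : 0 < c ->
  (forall d x, 0 <= d <= dstar -> m <= x <= M -> c <= F d x) ->
  bounded_family F -> bounded_family (fun d x => (F d x)^-1).
Proof.
move=> c0 Fc [B hF]; exists (B / c ^+ 2 + c^-1) => d hd.
by apply: (bounded_lipschitzV (f := F d) mM c0 _ (hF _ hd)) => x; apply: Fc.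
Qed.

Lemma small_family_delta : small_family (fun d _ => d).
Proof.
exists 1 => d /andP[d0 _]; rewrite mul1r.
by apply: bounded_lipschitz_le (bounded_lipschitz_cst m M d); rewrite ger0_norm.
Qed.

Lemma small_family_bounded F : small_family F -> bounded_family F.
Proof.
move=> [K hF]; exists (`|K| * dstar) => d hd; apply: bounded_lipschitz_le (hF _ hd).
case/andP: hd => d0 d1; apply: le_trans (ler_wpM2r d0 (ler_norm K)) _.
exact: ler_wpM2l.
Qed.

Lemma small_familyD F G : small_family F -> small_family G ->
  small_family (fun d x => F d x + G d x).
Proof.
move=> [K1 hF] [K2 hG]; exists (K1 + K2) => d hd; rewrite mulrDl.
by have := bounded_lipschitzD (hF _ hd) (hG _ hd).
Qed.

Lemma small_familyB F G : small_family F -> small_family G ->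
  small_family (fun d x => F d x - G d x).
Proof.
move=> [K1 hF] [K2 hG]; exists (K1 + K2) => d hd; rewrite mulrDl.
by have := bounded_lipschitzB (hF _ hd) (hG _ hd).
Qed.

Lemma small_familyMr F G : small_family F -> bounded_family G ->
  small_family (fun d x => F d x * G d x).
Proof.
move=> [K hF] [B hG]; exists (2 * K * B) => d hd.
rewrite (_ : 2 * K * B * d = 2 * (K * d) * B); last by ring.
by have := bounded_lipschitzM mM (hF _ hd) (hG _ hd).
Qed.

Lemma small_familyMl F G : bounded_family F -> small_family G ->
  small_family (fun d x => F d x * G d x).
Proof.
move=> hF hG; have [K hGF] := small_familyMr hG hF; exists K => d hd.
by apply: eq_bounded_lipschitz (hGF _ hd) => x _; rewrite mulrC.
Qed.

Lemma small_family_sum (F : nat -> R -> R -> R) lo hi :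
  (forall i, (lo <= i < hi)%N -> small_family (F i)) ->
  small_family (fun d x => \sum_(lo <= i < hi) F i d x).
Proof.
elim: hi => [|hi IH] hF.
  exists 0 => d _; rewrite mul0r.
  by apply: eq_bounded_lipschitz (bounded_lipschitz0 _ _) => x _; rewrite big_geq.
have [lohi|hilo] := leqP lo hi; last first.
  exists 0 => d _; rewrite mul0r.
  by apply: eq_bounded_lipschitz (bounded_lipschitz0 _ _) => x _; rewrite big_geq.
have [K hK] : small_family (fun d x => \sum_(lo <= i < hi) F i d x + F hi d x).
  apply: small_familyD; last by apply: hF; rewrite lohi ltnSn.
  by apply: IH => i /andP[? ?]; apply: hF; apply/andP; split => //; exact: ltnW.
by exists K => d hd; apply: eq_bounded_lipschitz (hK _ hd) => x _; rewrite big_nat_recr.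
Qed.

End Families.

Section PerturbedQuadratic.
Variables (R : realType) (k y y' h eps : R) (E : R -> R).
Hypotheses (k_gt0 : 0 < k) (h_ge0 : 0 <= h).
Hypothesis h_small : h <= `|y - y'| / 4.
Hypothesis eps_small : eps <= k * h * `|y - y'| / 4.
Hypothesis E_small : bounded_lipschitz (y - h) (y + h) eps E.

Lemma perturbed_quadratic_root :
  exists2 c, y - h <= c <= y + h & E c = k * ((c - y) * (c - y')).
Proof.
have yh : y - h <= y + h by move: h_ge0; lra.
pose G x := E x - k * ((x - y) * (x - y')).
have [L GL] : exists L, bounded_lipschitz (y - h) (y + h) L G.
  have bl_cst := bounded_lipschitz_cst (y - h) (y + h).
  have bl_lin z := bounded_lipschitzB (bounded_lipschitz_id (y - h) (y + h)) (bl_cst z).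
  have := bounded_lipschitzM yh (bl_cst k) (bounded_lipschitzM yh (bl_lin y) (bl_lin y')).
  by move/(bounded_lipschitzB E_small) => GL; eexists; exact: GL.
have [Eb _] := E_small.
have [Em Ep] : `|E (y - h)| <= eps /\ `|E (y + h)| <= eps.
  by split; apply: Eb; rewrite ?lexx ?yh.
have kh : 0 <= k * h by rewrite mulr_ge0 // ltW.
have khh : k * h * h <= k * h * `|y - y'| / 4.
  by rewrite -[leRHS]mulrA ler_wpM2l.
have [Gm Gp] : G (y - h) = E (y - h) + k * h * (y - y') - k * h * h /\
               G (y + h) = E (y + h) - k * h * (y - y') - k * h * h.
  by split; rewrite /G; ring.
(* At the endpoints the quadratic part has opposite signs and size at least
   3 k h |y - y'| / 4, while |E| <= eps <= k h |y - y'| / 4. *)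
have sign : G (y - h) * G (y + h) <= 0.
  have khD := mulr_ge0 kh (normr_ge0 (y - y')).
  have khh0 := mulr_ge0 kh h_ge0.
  rewrite Gm Gp; move: Em Ep eps_small khh khD khh0; rewrite !ler_norml.
  have [yy'|yy'] := lerP 0 (y - y'); [rewrite ger0_norm // | rewrite ltr0_norm // mulrN];
    set P := k * h * (y - y'); set Q := k * h * h;
    move=> /andP[? ?] /andP[? ?] ? ? ? ?;
    [apply: mulr_ge0_le0 | apply: mulr_le0_ge0]; lra.
have [c hc Gc] := lipschitz_IVT yh (bounded_lipschitz_ge0 yh GL) GL.2 sign.
by exists c => //; apply/eqP; rewrite -subr_eq0; apply/eqP.
Qed.

Lemma perturbed_quadratic_root_unique x1 x2 : h <= 1 ->
  y - h <= x1 <= y + h -> y - h <= x2 <= y + h ->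
  E x1 = k * ((x1 - y) * (x1 - y')) -> E x2 = k * ((x2 - y) * (x2 - y')) ->
  x1 = x2.
Proof.
move=> h_le1 hx1 hx2 e1 e2.
have [yy'|yy'] := eqVneq y y'.
  by move: hx1 hx2 h_small; rewrite yy' subrr normr0 mul0r; lra.
(* E x1 - E x2 = k (x1 - x2) (x1 + x2 - y - y') and the last factor is at
   least |y - y'| / 2, too steep for a function with Lipschitz constant eps. *)
have D0 : 0 < `|y - y'| by rewrite normr_gt0 subr_eq0.
have sep : `|y - y'| / 2 <= `|x1 + x2 - y - y'|.
  move: hx1 hx2 h_small; have [?|?] := lerP 0 (y - y').
    by rewrite ger0_norm // => ? ? ?; rewrite ler_normr; apply/orP; left; lra.
  by rewrite ltr0_norm // => ? ? ?; rewrite ler_normr; apply/orP; right; lra.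
have := E_small.2 _ _ hx1 hx2.
rewrite e1 e2 (_ : _ - _ = k * (x1 - x2) * (x1 + x2 - y - y')); last by ring.
rewrite !normrM (gtr0_norm k_gt0).
have A0 := normr_ge0 (x1 - x2).
have lower : k * `|x1 - x2| * (`|y - y'| / 2) <= k * `|x1 - x2| * `|x1 + x2 - y - y'|.
  by rewrite ler_wpM2l // mulr_ge0 // ltW.
have upper : eps * `|x1 - x2| <= k * `|y - y'| / 4 * `|x1 - x2|.
  apply: ler_wpM2r => //; apply: le_trans eps_small _.
  by rewrite -!mulrA ler_wpM2l ?ler_piMl ?mulr_ge0 ?invr_ge0 // ltW.
move=> lip.
have : k * `|y - y'| * `|x1 - x2| <= 0.
  by move: lower upper lip; set A := `|x1 - x2|; set D := `|y - y'|; lra.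
by rewrite pmulr_rle0 ?mulr_gt0 // normr_le0 subr_eq0 => /eqP.
Qed.

End PerturbedQuadratic.

Section Model.
Variable R : realType.
Variables (n : nat) (omega r mu : R) (p beta : nat -> R).
Hypotheses (n_gt0 : (0 < n)%N) (omega_ge0 : 0 <= omega) (mu_gt0 : 0 < mu).
Hypothesis p0 : p 0%N = 0.
Hypothesis p_prob : forall i, (1 <= i <= n)%N -> 0 <= p i <= 1.
Hypothesis beta_nondecr : forall i, (i < n)%N -> beta i <= beta i.+1.
Hypothesis beta0_gt0 : 0 < beta 0%N.

Local Notation om i := (p i * omega).
Local Notation de d i := ((1 - p i) * d).

Definition rate d x k := om k + de d k + beta k * x + mu.
Definition rate_top x := beta n * x + (mu + om n).
Definition rate0 x := beta 0%N * x + mu.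

(* [ratio d x i] is S_i / S_0 at an equilibrium with I = x, for i < n. *)
Fixpoint ratio d x i := if i is k.+1 then ratio d x k * de d k / rate d x k.+1 else 1.

(* [wsum w d x * S_0] is the part of sum_(1 <= i <= n) w_i S_i proportional to
   S_0; the rest, w_n mu / rate_top x, comes from births into S_n
   (see [sum_state]). *)
Definition wsum (w : nat -> R) d x :=
  \sum_(1 <= i < n) w i * ratio d x i + w n * (de d n.-1 * ratio d x n.-1 / rate_top x).

Local Notation wsum_om := (wsum (fun i => om i)).

(* The equilibrium state with S_0 = s (the value at indices i > n is junk). *)
Definition state d x s i :=
  if (i < n)%N then s * ratio d x i
  else (mu + de d n.-1 * (s * ratio d x n.-1)) / rate_top x.

Definition state0 d x := (om n * mu / rate_top x + r * x) / (rate0 x + d - wsum_om d x).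

(* The first equation fixes S_0 = [state0 d x]; substituting it into the
   infection equation and clearing denominators gives [reduced_eq d x = 0]
   (see [reduced_eqE]). *)
Definition reduced_eq d x :=
  (beta 0%N + wsum beta d x) * (om n * mu + r * x * rate_top x)
  + (beta n * mu - (r + mu) * rate_top x) * (rate0 x + d - wsum_om d x).

Lemma beta_ge_beta0 k : (k <= n)%N -> beta 0%N <= beta k.
Proof. by elim: k => [|k IH] // kn; apply: le_trans (IH (ltnW kn)) (beta_nondecr kn). Qed.

Lemma beta_n_gt0 : 0 < beta n.
Proof. exact: lt_le_trans beta0_gt0 (beta_ge_beta0 (leqnn n)). Qed.

Lemma rate_ge d x k : 0 <= d -> 0 <= x -> (1 <= k <= n)%N -> mu <= rate d x k.
Proof.
move=> d0 x0 kn; have /andP[pk0 pk1] := p_prob kn.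
have : 0 <= om k by rewrite mulr_ge0.
have : 0 <= de d k by rewrite mulr_ge0 // subr_ge0.
have : 0 <= beta k * x.
  by rewrite mulr_ge0 // (le_trans (ltW beta0_gt0)) // beta_ge_beta0 //; case/andP: kn.
by rewrite /rate; lra.
Qed.

Lemma rate_top_ge x : 0 <= x -> mu <= rate_top x.
Proof.
move=> x0; have /andP[pn0 _] : 0 <= p n <= 1 by apply: p_prob; rewrite n_gt0 leqnn.
have : 0 <= om n by rewrite mulr_ge0.
have : 0 <= beta n * x by rewrite mulr_ge0 // (le_trans (ltW beta0_gt0)) // beta_ge_beta0.
by rewrite /rate_top; lra.
Qed.

Lemma rate0_ge x : 0 <= x -> mu <= rate0 x.
Proof. by move=> x0; rewrite /rate0 lerDr mulr_ge0 // ltW. Qed.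

Lemma rate_neq0 d x k : 0 <= d -> 0 <= x -> (1 <= k <= n)%N -> rate d x k != 0.
Proof. by move=> d0 x0 kn; rewrite gt_eqF // (lt_le_trans mu_gt0) // rate_ge. Qed.

Lemma rate_top_neq0 x : 0 <= x -> rate_top x != 0.
Proof. by move=> x0; rewrite gt_eqF // (lt_le_trans mu_gt0) // rate_top_ge. Qed.

Lemma predn_lt : (n.-1 < n)%N.
Proof. by rewrite prednK. Qed.

Lemma sum_ord_split (f : nat -> R) :
  \sum_(i < n.+1) f i = f 0%N + \sum_(1 <= i < n.+1) f i.
Proof. by rewrite -(big_mkord xpredT) big_ltn. Qed.

Lemma sum_waning_telescope d (S : nat -> R) :
  \sum_(1 <= i < n) (de d i.-1 * S i.-1 - de d i * S i) = d * S 0%N - de d n.-1 * S n.-1.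
Proof.
rewrite -{1}(prednK n_gt0) big_add1 /=.
rewrite (eq_bigr (fun i => - (de d i.+1 * S i.+1 - de d i * S i))) => [|i _]; last first.
  by rewrite opprB.
by rewrite sumrN telescope_sumr // p0 subr0 mul1r opprB.
Qed.

Lemma equilibrium_total d S x :
  \sum_(1 <= i < n.+1) om i * S i - d * S 0%N + r * x
    - beta 0%N * x * S 0%N - mu * S 0%N = 0 ->
  (forall i, (1 <= i < n)%N ->
    - om i * S i + de d i.-1 * S i.-1 - de d i * S i - beta i * x * S i - mu * S i = 0) ->
  mu - om n * S n + de d n.-1 * S n.-1 - beta n * x * S n - mu * S n = 0 ->
  x * (\sum_(i < n.+1) beta i * S i) - r * x - mu * x = 0 ->
  \sum_(i < n.+1) S i + x = 1.
Proof.
move=> e1 emid en eI.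
(* The sum of all the equations is mu (1 - sum_i S_i - x) = 0. *)
have mid : \sum_(1 <= i < n) (de d i.-1 * S i.-1 - de d i * S i) =
    \sum_(1 <= i < n) om i * S i + x * \sum_(1 <= i < n) beta i * S i
    + mu * \sum_(1 <= i < n) S i.
  rewrite !mulr_sumr -!big_split /=; apply: eq_big_nat => i hi.
  by apply/eqP; rewrite -subr_eq0 -(emid i hi); apply/eqP; ring.
rewrite sum_waning_telescope in mid.
rewrite big_nat_recr //= in e1.
rewrite (sum_ord_split (fun i => beta i * S i)) big_nat_recr //= in eI.
rewrite sum_ord_split big_nat_recr //=.
move: e1 eI mid; set A := \sum_(1 <= i < n) _ * _; set B := \sum_(1 <= i < n) beta i * _.
set T := \sum_(1 <= i < n) S i => e1 eI mid.
suff : mu * (S 0%N + (T + S n) + x - 1) = 0.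
  by move/eqP; rewrite mulf_eq0 gt_eqF //= subr_eq0 => /eqP.
lra.
Qed.

Lemma equilibrium_state d S x : 0 <= d -> 0 <= x ->
  is_equilibrium n d omega r mu p beta S x ->
  forall i, (i <= n)%N -> S i = state d x (S 0%N) i.
Proof.
move=> d0 x0 [_ emid en _ _].
have below i : (i < n)%N -> S i = S 0%N * ratio d x i.
  elim: i => [|i IH] lt_in; first by rewrite mulr1.
  have ri := rate_neq0 d0 x0 (ltnW lt_in : (0 < i.+1 <= n)%N).
  have /= e := emid i.+1 lt_in.
  rewrite /= !mulrA -IH ?(ltnW lt_in) // -[LHS](mulfK ri); congr (_ / _).
  by apply/eqP; rewrite eq_sym -subr_eq0 -e /rate; apply/eqP; ring.
move=> i; rewrite leq_eqVlt => /orP[/eqP->|lt_in]; last by rewrite /state lt_in below.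
rewrite /state ltnn -below ?predn_lt // -[LHS](mulfK (rate_top_neq0 x0)).
by congr (_ / _); apply/eqP; rewrite eq_sym -subr_eq0 -en /rate_top; apply/eqP; ring.
Qed.

Lemma state_mid_eq d x s i : 0 <= d -> 0 <= x -> (1 <= i < n)%N ->
  - om i * state d x s i + de d i.-1 * state d x s i.-1 - de d i * state d x s i
  - beta i * x * state d x s i - mu * state d x s i = 0.
Proof.
case: i => // i d0 x0 /andP[_ lt_in].
have := rate_neq0 d0 x0 (ltnW lt_in : (0 < i.+1 <= n)%N).
by rewrite /state lt_in (ltnW lt_in) /= /rate => ri; field.
Qed.

Lemma state_top_eq d x s : 0 <= x ->
  mu - om n * state d x s n + de d n.-1 * state d x s n.-1
  - beta n * x * state d x s n - mu * state d x s n = 0.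
Proof.
move/rate_top_neq0; rewrite /state ltnn predn_lt /rate_top => rt.
by field.
Qed.

Lemma sum_state w d x s :
  \sum_(1 <= i < n.+1) w i * state d x s i = s * wsum w d x + w n * mu / rate_top x.
Proof.
rewrite big_nat_recr //= /wsum mulrDr mulr_sumr.
rewrite (eq_big_nat _ _ (F2 := fun i => s * (w i * ratio d x i))); last first.
  by move=> i /andP[_ lt_in]; rewrite /state lt_in; ring.
by rewrite /state ltnn; ring.
Qed.

Lemma state_first_eq d x s :
  \sum_(1 <= i < n.+1) om i * state d x s i - d * state d x s 0%N + r * x
    - beta 0%N * x * state d x s 0%N - mu * state d x s 0%N
  = om n * mu / rate_top x + r * x - s * (rate0 x + d - wsum_om d x).
Proof. by rewrite sum_state /state n_gt0 /rate0 /=; ring. Qed.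

Lemma state_infection_eq d x s :
  x * (\sum_(i < n.+1) beta i * state d x s i) - r * x - mu * x
  = x * (s * (beta 0%N + wsum beta d x) + beta n * mu / rate_top x - (r + mu)).
Proof.
rewrite (sum_ord_split (fun i => beta i * state d x s i)) sum_state.
by rewrite /state n_gt0 /=; ring.
Qed.

Lemma reduced_eqE d x s : rate_top x != 0 ->
  reduced_eq d x = rate_top x *
    ((rate0 x + d - wsum_om d x)
       * (s * (beta 0%N + wsum beta d x) + beta n * mu / rate_top x - (r + mu))
     + (beta 0%N + wsum beta d x)
       * (om n * mu / rate_top x + r * x - s * (rate0 x + d - wsum_om d x))).
Proof. by move=> rt; rewrite /reduced_eq; field. Qed.

Lemma eq_is_equilibrium d S S' x : (forall i, (i <= n)%N -> S i = S' i) ->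
  is_equilibrium n d omega r mu p beta S x -> is_equilibrium n d omega r mu p beta S' x.
Proof.
move=> SS' [e1 emid en eI eN].
have sum_nat (f : nat -> R -> R) :
    \sum_(1 <= i < n.+1) f i (S i) = \sum_(1 <= i < n.+1) f i (S' i).
  by apply: eq_big_nat => i /andP[_ le_in]; rewrite SS'.
have sum_ord (f : nat -> R -> R) :
    \sum_(i < n.+1) f i (S i) = \sum_(i < n.+1) f i (S' i).
  by apply: eq_bigr => i _; rewrite SS' // -ltnS.
have le0n := leq0n n; have le_pn := leq_pred n.
split.
- by rewrite -(sum_nat (fun i y => om i * y)) -SS'.
- move=> i /andP[i_gt0 lt_in]; rewrite -!SS' ?(ltnW lt_in) //.
    by apply: emid; rewrite i_gt0.
  by rewrite (leq_trans (leq_pred i)) // ltnW.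
- by rewrite -!SS'.
- by rewrite -(sum_ord (fun i y => beta i * y)).
- by rewrite -(sum_ord (fun _ y => y)).
Qed.

Lemma equilibrium_reduced d S x : 0 <= d -> 0 < x ->
  rate0 x + d - wsum_om d x != 0 -> is_equilibrium n d omega r mu p beta S x ->
  reduced_eq d x = 0 /\ forall i, (i <= n)%N -> S i = state d x (state0 d x) i.
Proof.
move=> d0 x_gt0 D0 eqS; have x0 := ltW x_gt0.
have S_state := equilibrium_state d0 x0 eqS.
have [e1 _ _ eI _] := eq_is_equilibrium S_state eqS.
rewrite state_first_eq in e1; rewrite state_infection_eq in eI.
have S0E : S 0%N = state0 d x.
  rewrite /state0 -[S 0%N](mulfK D0); congr (_ / _).
  by apply/eqP; rewrite eq_sym -subr_eq0 e1.
split; last by rewrite -S0E.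
move/eqP: eI; rewrite mulf_eq0 gt_eqF //= => /eqP eI.
by rewrite (reduced_eqE d (S 0%N) (rate_top_neq0 x0)) eI e1 !mulr0 addr0 mulr0.
Qed.

Lemma reduced_equilibrium d x : 0 <= d -> 0 < x ->
  rate0 x + d - wsum_om d x != 0 -> reduced_eq d x = 0 ->
  is_endemic_equilibrium n d omega r mu p beta (state d x (state0 d x)) x.
Proof.
move=> d0 x_gt0 D0 red0; have x0 := ltW x_gt0; split; last exact/eqP/lt0r_neq0.
set s := state0 d x.
have e1 := state_first_eq d x s.
have s_def : s * (rate0 x + d - wsum_om d x) = om n * mu / rate_top x + r * x.
  by rewrite /s /state0 divfK.
rewrite s_def subrr in e1.
have eI := state_infection_eq d x s.
rewrite (reduced_eqE d s (rate_top_neq0 x0)) s_def subrr mulr0 addr0 in red0.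
move/eqP: red0; rewrite !mulf_eq0 (negbTE (rate_top_neq0 x0)) (negbTE D0) /= => /eqP I0.
rewrite I0 mulr0 in eI.
have emid i := @state_mid_eq d x s i d0 x0.
have en := state_top_eq d s x0.
by split => //; exact: equilibrium_total e1 emid en eI.
Qed.

Definition root_poly x :=
  rate0 x * rate_top x + r * rate_top x - beta n * rate0 x - om n * beta 0%N.

Definition remainder d x :=
  wsum beta d x * (om n * mu + r * x * rate_top x)
  + (beta n * mu - (r + mu) * rate_top x) * (d - wsum_om d x).

Lemma reduced_eq_split d x : reduced_eq d x = remainder d x - mu * root_poly x.
Proof. by rewrite /reduced_eq /remainder /root_poly /rate0 /rate_top; ring. Qed.

Lemma root_poly_root y : is_root_eq n omega r mu p beta y -> root_poly y = 0.
Proof.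
case=> /= A0 B0 e; apply: etrans (_ : _ = rate0 y * rate_top y * 0) (mulr0 _).
by rewrite -e /root_poly /rate0 /rate_top; field; rewrite A0 B0.
Qed.

Lemma root_poly_factor y1 y2 : root_poly y1 = 0 -> root_poly y2 = 0 -> y1 != y2 ->
  forall x, root_poly x = beta 0%N * beta n * ((x - y1) * (x - y2)).
Proof.
move=> e1 e2 y12 x.
set c2 := beta 0%N * beta n.
set c1 := beta 0%N * (mu + om n) + mu * beta n + r * beta n - beta n * beta 0%N.
set c0 := mu * (mu + om n) + r * (mu + om n) - beta n * mu - om n * beta 0%N.
have qE z : root_poly z = c2 * z ^+ 2 + c1 * z + c0.
  by rewrite /root_poly /rate0 /rate_top /c2 /c1 /c0; ring.
rewrite qE in e1; rewrite qE in e2.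
have c1E : c1 = - c2 * (y1 + y2).
  have /eqP : (y1 - y2) * (c1 + c2 * (y1 + y2)) = 0.
    by rewrite -[RHS](subrr 0) -{1}e1 -e2; ring.
  by rewrite mulf_eq0 subr_eq0 (negbTE y12) addr_eq0 => /eqP->; ring.
have c0E : c0 = c2 * y1 * y2.
  by apply/eqP; rewrite -subr_eq0 -[X in _ == X]e1 c1E; apply/eqP; ring.
by rewrite qE c1E c0E; ring.
Qed.

Section SmallWaning.
Variables m M dstar : R.
Hypotheses (m_gt0 : 0 < m) (mM : m <= M).

Local Notation bounded_family := (bounded_family m M dstar).
Local Notation small_family := (small_family m M dstar).

Let x_ge0 x : m <= x <= M -> 0 <= x.
Proof. by case/andP=> mx _; apply: le_trans (ltW m_gt0) mx. Qed.

Let lin_bounded a b : bounded_family (fun _ x => a * x + b).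
Proof.
apply: bounded_familyD (bounded_family_cst _ _ _ _).
apply: (bounded_familyM mM); [exact: bounded_family_cst | exact: bounded_family_id].
Qed.

Lemma waning_small k : small_family (fun d _ => de d k).
Proof.
by apply: (small_familyMl mM); [exact: bounded_family_cst | exact: small_family_delta].
Qed.

Lemma rate_inv_bounded k : (1 <= k <= n)%N ->
  bounded_family (fun d x => (rate d x k)^-1).
Proof.
move=> kn; apply: (bounded_familyV mM mu_gt0) => [d x /andP[d0 _] hx|].
  exact: rate_ge (x_ge0 hx) kn.
have -> : (fun d x => rate d x k) = (fun d x => (beta k * x + (om k + mu)) + de d k).
  by apply/funext => d; apply/funext => x; rewrite /rate; ring.
apply: bounded_familyD; first exact: lin_bounded.
exact/small_family_bounded/waning_small.
Qed.

Lemma ratio_bounded i : (i < n)%N -> bounded_family (fun d x => ratio d x i).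
Proof.
elim: i => [|i IH] lt_in; first exact: bounded_family_cst.
apply: (bounded_familyM mM); first apply: (bounded_familyM mM).
- exact: IH (ltnW lt_in).
- exact/small_family_bounded/waning_small.
- exact/rate_inv_bounded/ltnW.
Qed.

Lemma ratio_small i : (0 < i < n)%N -> small_family (fun d x => ratio d x i).
Proof.
case: i => // i /andP[_ lt_in] /=.
apply: (small_familyMr mM); last exact/rate_inv_bounded/ltnW.
apply: (small_familyMl mM); first exact/ratio_bounded/ltnW.
exact: waning_small.
Qed.

Lemma wsum_small w : small_family (wsum w).
Proof.
apply: small_familyD.
  apply: small_family_sum => i /andP[i_gt0 lt_in].
  apply: (small_familyMl mM); first exact: bounded_family_cst.
  by apply: ratio_small; rewrite i_gt0.
apply: (small_familyMl mM); first exact: bounded_family_cst.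
apply: (small_familyMr mM).
  by apply: (small_familyMr mM); [exact: waning_small | exact/ratio_bounded/predn_lt].
apply: (bounded_familyV mM mu_gt0) => [d x _ hx|]; first exact/rate_top_ge/x_ge0.
exact: lin_bounded.
Qed.

Lemma remainder_small : small_family remainder.
Proof.
apply: small_familyD; [apply: (small_familyMr mM) | apply: (small_familyMl mM)].
- exact: wsum_small.
- apply: bounded_familyD; first exact: bounded_family_cst.
  apply: (bounded_familyM mM); last exact: lin_bounded.
  by apply: (bounded_familyM mM); [exact: bounded_family_cst | exact: bounded_family_id].
- apply: bounded_familyB; first exact: bounded_family_cst.
  by apply: (bounded_familyM mM); [exact: bounded_family_cst | exact: lin_bounded].
- by apply: small_familyB; [exact: small_family_delta | exact: wsum_small].
Qed.

End SmallWaning.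

Lemma wsum_no_waning w x : wsum w 0 x = 0.
Proof.
have ratio0 i : (0 < i)%N -> ratio 0 x i = 0.
  by case: i => // i _; rewrite /= !mulr0 mul0r.
rewrite /wsum mulr0 !mul0r mulr0 addr0 big_nat big1 // => i /andP[i_gt0 _].
by rewrite ratio0 ?mulr0.
Qed.

Lemma unique_endemic_equilibrium_of_reduced d (J : R -> Prop) : 0 <= d ->
  (forall x, J x -> 0 < x /\ rate0 x + d - wsum_om d x != 0) ->
  (exists I, [/\ J I, reduced_eq d I = 0
                & forall I', J I' -> reduced_eq d I' = 0 -> I' = I]) ->
  exists S I, [/\ is_endemic_equilibrium n d omega r mu p beta S I, J I
    & forall S' I', is_endemic_equilibrium n d omega r mu p beta S' I' -> J I' ->
        I' = I /\ forall i, (i <= n)%N -> S' i = S i].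
Proof.
move=> d0 hJ [I [JI red0 red_uniq]]; have [I_gt0 DI] := hJ _ JI.
exists (state d I (state0 d I)), I; split=> //; first exact: reduced_equilibrium.
move=> S' I' [eqS' _] JI'; have [I'_gt0 DI'] := hJ _ JI'.
have [red0' S'E] := equilibrium_reduced d0 I'_gt0 DI' eqS'.
by have I'I := red_uniq _ JI' red0'; subst I'.
Qed.

Lemma reduced_eq_unique_root y y' d h eps :
  (forall x, root_poly x = beta 0%N * beta n * ((x - y) * (x - y'))) ->
  0 <= h <= 1 -> h <= `|y - y'| / 4 ->
  eps <= mu * (beta 0%N * beta n) * h * `|y - y'| / 4 ->
  bounded_lipschitz (y - h) (y + h) eps (remainder d) ->
  exists I, [/\ y - h <= I <= y + h, reduced_eq d I = 0
              & forall I', y - h <= I' <= y + h -> reduced_eq d I' = 0 -> I' = I].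
Proof.
move=> factor /andP[h0 h1] h_small eps_small rem_small.
have k_gt0 : 0 < mu * (beta 0%N * beta n) by rewrite !mulr_gt0 ?beta_n_gt0.
have redE x : reduced_eq d x = 0 <->
    remainder d x = mu * (beta 0%N * beta n) * ((x - y) * (x - y')).
  rewrite reduced_eq_split factor !mulrA; split=> [/eqP|->]; last by rewrite subrr.
  by rewrite subr_eq0 => /eqP.
have [c hc rem_c] := perturbed_quadratic_root k_gt0 h0 h_small eps_small rem_small.
exists c; split=> [||I' hI' /redE rem_I']; [done | exact/redE |].
by have := perturbed_quadratic_root_unique k_gt0 h_small eps_small rem_small h1
  hI' hc rem_I' rem_c.
Qed.

Lemma unique_endemic_equilibrium_near_root y y' d h :
  (forall x, root_poly x = beta 0%N * beta n * ((x - y) * (x - y'))) ->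
  0 <= d -> 0 <= h <= 1 -> 0 < y - h -> h <= `|y - y'| / 4 ->
  bounded_lipschitz (y - h) (y + h) (mu * (beta 0%N * beta n) * h * `|y - y'| / 4)
    (remainder d) ->
  (forall x, y - h <= x <= y + h -> wsum_om d x <= mu / 2) ->
  exists S I, [/\ is_endemic_equilibrium n d omega r mu p beta S I, y - h <= I <= y + h
    & forall S' I', is_endemic_equilibrium n d omega r mu p beta S' I' ->
        y - h <= I' <= y + h -> I' = I /\ forall i, (i <= n)%N -> S' i = S i].
Proof.
move=> factor d0 h01 yh_gt0 h_small rem_small wsum_le.
apply: unique_endemic_equilibrium_of_reduced => // [x Jx|].
  have x_gt0 : 0 < x by case/andP: Jx; lra.
  have := rate0_ge (ltW x_gt0); have := wsum_le x Jx.
  by split=> //; rewrite gt_eqF //; move: mu_gt0; lra.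
exact: reduced_eq_unique_root factor h01 h_small (lexx _) rem_small.
Qed.

Lemma unique_endemic_equilibrium_small_waning C y y' :
  0 < C -> 0 < y -> y != y' ->
  (forall x, root_poly x = beta 0%N * beta n * ((x - y) * (x - y'))) ->
  exists2 d0 : R, 0 < d0 & forall d : R, 0 <= d < d0 ->
    exists S I, [/\ is_endemic_equilibrium n d omega r mu p beta S I, in_J C d y I
      & forall S' I', is_endemic_equilibrium n d omega r mu p beta S' I' ->
          in_J C d y I' -> I' = I /\ forall i, (i <= n)%N -> S' i = S i].
Proof.
move=> C_gt0 y_gt0 yy' factor.
have m_gt0 : 0 < y / 2 by lra.
have mM : y / 2 <= y + 1 by lra.
have d1 : 0 <= (1 : R) <= 1 by rewrite ler01 lexx.
have [KE remE] := remainder_small 1 m_gt0 mM.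
have [KP wsumP] := wsum_small 1 m_gt0 mM (fun i => om i).
have KE0 : 0 <= KE by have := bounded_lipschitz_ge0 mM (remE 1 d1); rewrite mulr1.
have KP0 : 0 <= KP by have := bounded_lipschitz_ge0 mM (wsumP 1 d1); rewrite mulr1.
have [KE1 KP1] : 0 < KE + 1 /\ 0 < KP + 1 by split; lra.
set k := mu * (beta 0%N * beta n); have k_gt0 : 0 < k by rewrite !mulr_gt0 ?beta_n_gt0.
set D := `|y - y'|; have D_gt0 : 0 < D by rewrite normr_gt0 subr_eq0.
pose a := Num.min (y / 2) (Num.min 1 (D / 4)).
have a_gt0 : 0 < a by rewrite !lt_min ltr01 !divr_gt0.
(* For t = sqrt d < t0 the interval J lies in [y / 2, y + 1], its radius C t
   is at most |y - y'| / 4, and the O(t^2) bounds on [remainder] and [wsum]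
   stay below k C t |y - y'| / 4 and mu / 2. *)
pose t0 := Num.min (a / C)
  (Num.min 1 (Num.min (k * C * D / 4 / (KE + 1)) (mu / 2 / (KP + 1)))).
have t0_gt0 : 0 < t0 by rewrite !lt_min ltr01 !divr_gt0 ?mulr_gt0 ?beta_n_gt0.
exists (t0 ^+ 2) => [|d /andP[d0 d_lt]]; first exact: exprn_gt0.
have : Num.sqrt d < t0 by rewrite -(gtr0_norm t0_gt0) -sqrtr_sqr ltr_sqrt ?exprn_gt0.
have t_ge0 := sqrtr_ge0 d; have dE := sqr_sqrtr d0; rewrite /in_J.
set t := Num.sqrt d in t_ge0 dE *; rewrite expr2 in dE.
rewrite /t0 !lt_min !ltr_pdivlMr ?mulr_gt0 // => /and4P[tCa t_lt1 tKE tKP].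
have [Ct_y [Ct_1 Ct_D]] : C * t <= y / 2 /\ C * t <= 1 /\ C * t <= D / 4.
  by move: tCa; rewrite /a !lt_min mulrC => /and3P[? ? ?]; lra.
have d_le1 : 0 <= d <= 1 by rewrite d0 -dE; nra.
have KPd : KP * d <= mu / 2 by have := mulr_ge0 KP0 t_ge0; rewrite -dE; nra.
have KEd : KE * d <= k * (C * t) * D / 4 by rewrite -dE; nra.
have J_sub x : y - C * t <= x <= y + C * t -> y / 2 <= x <= y + 1.
  by case/andP=> ? ?; apply/andP; split; lra.
apply: unique_endemic_equilibrium_near_root factor d0 _ _ Ct_D _ _ => //.
- by rewrite Ct_1 andbT mulr_ge0 // ltW.
- by lra.
- apply: bounded_lipschitz_le KEd _.
  by apply: bounded_lipschitz_sub (remE d d_le1); lra.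
- move=> x /J_sub /((wsumP d d_le1).1 x); rewrite ler_norml => /andP[_].
  by move: KPd; lra.
Qed.

Lemma unique_endemic_equilibrium_no_waning C y : 0 < y -> root_poly y = 0 ->
  exists S I, [/\ is_endemic_equilibrium n 0 omega r mu p beta S I, in_J C 0 y I
    & forall S' I', is_endemic_equilibrium n 0 omega r mu p beta S' I' ->
        in_J C 0 y I' -> I' = I /\ forall i, (i <= n)%N -> S' i = S i].
Proof.
move=> y_gt0 root_y; have J0 x : in_J C 0 y x = (x == y).
  by rewrite /in_J sqrtr0 mulr0 subr0 addr0 eq_le andbC.
apply: unique_endemic_equilibrium_of_reduced (lexx 0) _ _ => [x|].
  rewrite J0 => /eqP->; split=> //.
  rewrite wsum_no_waning addr0 subr0 gt_eqF // (lt_le_trans mu_gt0) //.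
  by rewrite rate0_ge // ltW.
exists y; rewrite J0; split=> // [|I']; last by rewrite J0 => /eqP.
by rewrite reduced_eq_split root_y /remainder !wsum_no_waning; ring.
Qed.

Lemma unique_endemic_equilibrium_in_J C y y' :
  0 < C -> root_poly y = 0 ->
  (y != y' -> forall x, root_poly x = beta 0%N * beta n * ((x - y) * (x - y'))) ->
  exists d0 : R, 0 < d0 /\ forall delta : R, 0 <= delta < d0 ->
    (forall x, in_J C delta y x -> 0 < x <= 1) ->
    `|y - y'| >= delta `^ (3%:R)^-1 ->
    exists S : nat -> R, exists I : R,
      [/\ is_endemic_equilibrium n delta omega r mu p beta S I,
          in_J C delta y I
        & forall (S' : nat -> R) (I' : R),
            is_endemic_equilibrium n delta omega r mu p beta S' I' ->
            in_J C delta y I' ->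
            I' = I /\ forall i, (i <= n)%N -> S' i = S i].
Proof.
move=> C_gt0 root_y factor.
have [y_le0|y_gt0] := lerP y 0.
  exists 1; split=> // d /andP[d0 _] J_pos _; exfalso.
  have /J_pos/andP[] : in_J C d y y.
    have := mulr_ge0 (ltW C_gt0) (sqrtr_ge0 d).
    by rewrite /in_J => ?; apply/andP; split; lra.
  by lra.
have [<-|yy'] := eqVneq y y'.
  exists 1; split=> // d /andP[d0 _] _; rewrite subrr normr0 => pow_le0.
  have -> : d = 0.
    by apply: (@powR_eq0_eq0 _ _ 3%:R^-1); apply/le_anti; rewrite pow_le0 powR_ge0.
  exact: unique_endemic_equilibrium_no_waning.
have [d0 d0_gt0 small] :=
  unique_endemic_equilibrium_small_waning C_gt0 y_gt0 yy' (factor yy').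
by exists d0; split=> // d /small.
Qed.

End Model.

Theorem lemma2 (R : realType) (n : nat) (omega r mu : R) (p beta : nat -> R)
    (C y1 y2 y : R) :
  (1 <= n)%N -> 0 <= omega -> 0 < r -> 0 < mu ->
  p 0%N = 0 -> (forall i, (1 <= i <= n)%N -> 0 <= p i <= 1) ->
  (forall i, (i < n)%N -> beta i <= beta i.+1) -> beta 0%N < beta n ->
  0 < beta 0%N ->
  (* y1 <= y2 are the real roots of the equation *)
  is_root_eq n omega r mu p beta y1 -> is_root_eq n omega r mu p beta y2 ->
  (forall x, is_root_eq n omega r mu p beta x -> x = y1 \/ x = y2) ->
  y1 <= y2 ->
  (* the constant C *)
  0 < C ->
  (exists d1 : R, 0 < d1 /\ forall delta : R, 0 <= delta < d1 ->
     forall (S : nat -> R) (I : R),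
       is_endemic_equilibrium n delta omega r mu p beta S I -> 0 <= I <= 1 ->
       in_J C delta y1 I \/ in_J C delta y2 I) ->
  (* i in {1,2}: y = y_i *)
  (y = y1 \/ y = y2) ->
  exists d0 : R, 0 < d0 /\ forall delta : R, 0 <= delta < d0 ->
    (* J_i is contained in (0,1] *)
    (forall x, in_J C delta y x -> 0 < x <= 1) ->
    `|y1 - y2| >= delta `^ (3%:R)^-1 ->
    exists S : nat -> R, exists I : R,
      [/\ is_endemic_equilibrium n delta omega r mu p beta S I,
          in_J C delta y I
        & forall (S' : nat -> R) (I' : R),
            is_endemic_equilibrium n delta omega r mu p beta S' I' ->
            in_J C delta y I' ->
            I' = I /\ forall i, (i <= n)%N -> S' i = S i].
Proof.
move=> n_gt0 omega_ge0 _ mu_gt0 p0 p_prob beta_nondecr _ beta0_gt0 root1 root2 _ _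
  C_gt0 _ y12.
have [y' [root_y factor ->]] : exists y', [/\ root_poly n omega r mu p beta y = 0,
    y != y' -> forall x,
      root_poly n omega r mu p beta x = beta 0%N * beta n * ((x - y) * (x - y'))
  & `|y1 - y2| = `|y - y'|].
  have [q1 q2] := (root_poly_root root1, root_poly_root root2).
  by case: y12 => ->; [exists y2 | exists y1; rewrite distrC]; split=> //;
    exact: root_poly_factor.
by have := unique_endemic_equilibrium_in_J n_gt0 omega_ge0 mu_gt0 p0 p_prob
  beta_nondecr beta0_gt0 C_gt0 root_y factor.
Qed.
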